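(* An orientation $O$ of an interval hypergraph $\mathcal{I}$ on $[n]$ is acyclic if and only if there are no $I,J\in\mathcal{I}$ with $O(I)\in J\setminus\{O(J)\}$ and $O(J)\in I\setminus\{O(I)\}$.
   Context: An interval hypergraph $\mathcal{I}$ on $[n]$ is a collection of intervals $[i,j]=\{i,\dots,j\}$ of $[n]$ containing all singletons. An orientation is a map $O:\mathcal{I}\to[n]$ with $O(I)\in I$ for all $I$; it is acyclic if there are no $H_1,\dots,H_k\in\mathcal{I}$, $k\ge2$, with $O(H_{i+1})\in H_i\setminus\{O(H_i)\}$ for $i\in[k-1]$ and $O(H_1)\in H_k\setminus\{O(H_k)\}$. *)

From mathcomp Require Import all_boot.
Set Implicit Arguments. Unset Strict Implicit. Unset Printing Implicit Defensive.

(* The ground set [n] is represented by 'I_n (points 0..n-1, i.e. shifted by one).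
   An interval [i,j] = {i,...,j} with i <= j is represented by the pair (i,j). *)
Definition interval (n : nat) := ('I_n * 'I_n)%type.

Definition in_int (n : nat) (I : interval n) (x : 'I_n) : bool :=
  (I.1 <= x) && (x <= I.2).

Definition interval_hypergraph (n : nat) (H : {set interval n}) : Prop :=
  (forall I, I \in H -> I.1 <= I.2) /\ (forall x : 'I_n, (x, x) \in H).

Definition orientation (n : nat) (H : {set interval n}) (O : interval n -> 'I_n) : Prop :=
  forall I, I \in H -> in_int I (O I).

Definition in_minus (n : nat) (O : interval n -> 'I_n) (I : interval n) (x : 'I_n) : bool :=
  in_int I x && (x != O I).

Definition is_cycle (n : nat) (H : {set interval n}) (O : interval n -> 'I_n)
  (s : seq (interval n)) : Prop :=
  match s with
  | [::] => False
  | H1 :: _ =>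
      2 <= size s /\ all (fun I => I \in H) s /\
      (forall i, i.+1 < size s -> in_minus O (nth H1 s i) (O (nth H1 s i.+1))) /\
      in_minus O (last H1 s) (O H1)
  end.

Definition acyclic (n : nat) (H : {set interval n}) (O : interval n -> 'I_n) : Prop :=
  ~ exists s : seq (interval n), is_cycle H O s.

(* Write I -> J when O(J) lies in I \ {O(I)}.  A cycle of length at least
   three can always be shortened.  Let b be the member whose point O(b) is
   largest, a -> b -> c its neighbours on the cycle.  If O(c) <= O(a), then
   O(a) lies between O(c) and O(b), both of which are in the interval b, so
   b -> a and {a, b} is a cycle of length two.  Otherwise
   O(a) < O(c) <= O(b), and O(a), O(b) are in the interval a, hence so is
   O(c): a -> c, and b can be dropped from the cycle. *)

From mathcomp Require Import all_boot.

Set Implicit Arguments.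
Unset Strict Implicit.
Unset Printing Implicit Defensive.

Lemma cycle_shortcut (T : Type) (e : rel T) (b c : T) (t : seq T) :
  cycle e [:: b, c & t] -> e (last c t) c -> cycle e (c :: t).
Proof. by rewrite /= !rcons_path /= => /and3P[_ -> _] ->. Qed.

Section OrientedArcs.

Variables (n : nat) (H : {set interval n}) (O : interval n -> 'I_n).
Hypothesis orientedO : orientation H O.

Definition arc (I J : interval n) : bool :=
  [&& I \in H, J \in H & in_minus O I (O J)].

Lemma arc_max_shortcut (a b c : interval n) :
  arc a b -> arc b c -> O a <= O b -> O c <= O b -> arc b a || arc a c.
Proof.
case/and3P=> aH bH /andP[/andP[_ Ob_le_a2] Ob_neq_Oa] /and3P[_ cH /andP[/andP[b1_le_Oc _] _]].
move=> Oa_le_Ob Oc_le_Ob.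
have /andP[a1_le_Oa _] := orientedO aH; have /andP[_ Ob_le_b2] := orientedO bH.
rewrite /arc /in_minus /in_int aH bH cH /=.
case: (leqP (O c) (O a)) => [Oc_le_Oa | Oa_lt_Oc].
  by rewrite (leq_trans b1_le_Oc Oc_le_Oa) (leq_trans Oa_le_Ob Ob_le_b2) eq_sym Ob_neq_Oa.
have Oc_neq_Oa : O c != O a by rewrite -val_eqE gtn_eqF.
by rewrite (leq_trans a1_le_Oa (ltnW Oa_lt_Oc)) (leq_trans Oc_le_Ob Ob_le_a2) Oc_neq_Oa orbT.
Qed.

Lemma arc_cycle_two_cycle (s : seq (interval n)) :
  2 <= size s -> cycle arc s -> exists I J, arc I J && arc J I.
Proof.
have [k] := ubnP (size s); elim: k s => // k IHk [//|x0 s0] size_lt size_ge2 cyc.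
case: (@arg_maxnP _ x0 (mem (x0 :: s0)) (fun I => O I)) => [|b bs b_max].
  exact: mem_head.
case: (rot_to bs) => i s rot_s.
have {}cyc : cycle arc (b :: s) by rewrite -rot_s rot_cycle.
have {}b_max y : y \in b :: s -> O y <= O b by rewrite -rot_s mem_rot => /b_max.
have {rot_s}size_s : size (b :: s) = size (x0 :: s0) by rewrite -rot_s size_rot.
rewrite -size_s in size_lt size_ge2.
case: s => [//|c [|d t]] in cyc b_max size_lt size_ge2 {size_s} *.
  by exists b, c; move: cyc; rewrite /= andbT.
set a := last d t.
have [bc ab] : arc b c /\ arc a b.
  by move: cyc; rewrite /= rcons_path => /and3P[-> _ /andP[_ ->]].
have a_in : a \in [:: b, c, d & t] by rewrite 2!inE mem_last !orbT.
have c_in : c \in [:: b, c, d & t] by rewrite !inE eqxx orbT.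
case/orP: (arc_max_shortcut ab bc (b_max a a_in) (b_max c c_in)) => [ba | ac].
  by exists a, b; rewrite ab ba.
by apply: (IHk [:: c, d & t]) => //; apply: cycle_shortcut cyc ac.
Qed.

Lemma is_cycle_arc (s : seq (interval n)) : is_cycle H O s -> cycle arc s.
Proof.
case: s => [//|x t] [_ [/allP sH [step /= back]]].
have nthH i : i <= size t -> nth x (x :: t) i \in H by move=> ?; apply/sH/mem_nth.
rewrite /= rcons_path; apply/andP; split.
  apply/(pathP x) => i lt_it.
  by rewrite /arc -[nth x t i]/(nth x (x :: t) i.+1) !nthH ?step // ltnW.
by rewrite /arc back andbT; apply/andP; split; apply: sH; rewrite ?mem_head ?mem_last.
Qed.

End OrientedArcs.

Theorem proposition3p6 (n : nat) (H : {set interval n}) (O : interval n -> 'I_n) :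
  interval_hypergraph H -> orientation H O ->
  (acyclic H O <->
   ~ exists I J, [/\ I \in H, J \in H, in_minus O J (O I) & in_minus O I (O J)]).
Proof.
move=> _ orientedO; split.
  move=> acyc [I [J [IH JH JOI IOJ]]]; apply: acyc.
  exists [:: I; J]; split=> //; split; first by rewrite /= IH JH.
  by split=> // -[|[|i]].
move=> no_two_cycle [[//|x t] cyc]; apply: no_two_cycle.
have [I [J /andP[/and3P[IH JH IOJ] /and3P[_ _ JOI]]]] :=
  arc_cycle_two_cycle orientedO (proj1 cyc) (is_cycle_arc cyc).
by exists J, I.
Qed.
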